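(* Let $\Gamma$ be a finite monoid generating set of $V$, let $w = a_n \cdots a_1 \in \Gamma^+$ ($a_i \in \Gamma$), and let $x \in \{0,1\}^*$ be such that the computation $x = x_0 \mapsto x_1 \mapsto \cdots \mapsto x_n$ with $x_i = a_i(x_{i-1})$ ($1\le i\le n$) is defined (each $x_i$ is defined under the partial action on $\{0,1\}^*$). Then there exist $s, z_0, z_1, \ldots, z_n \in \{0,1\}^*$ such that: (1) $x_i = z_i s$ and $|z_i| \le |w|\cdot \mathrm{maxlen}(\Gamma)$ for $0 \le i \le n$; (2) $z_{i+1} = a_{i+1}(z_i)$ for $0 \le i \le n-1$ (in particular $z_n = w(z_0)$); (3) there exists $k \in \{0,1,\ldots,n\}$ with $|z_k| \le \mathrm{maxlen}(\Gamma)$. Moreover, $w(x) \ne x$ and $v(x)$ is defined for every suffix $v$ of $w$ if and only if $w(z_0) \neq z_0$ and $v(z_0)$ is defined for every suffix $v$ of $w$.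
   Context: Thompson group $V$: a prefix code is a set $P \subseteq \{0,1\}^*$ in which no element is a proper prefix of another; it is maximal if it is contained in no larger prefix code. Each bijection $\varphi: P\to Q$ between finite maximal prefix codes defines a homeomorphism of $\{0,1\}^\omega$ by $pt \mapsto \varphi(p)t$; $V$ is the group of all such homeomorphisms. Each $\varphi\in V$ has a unique such table with the fewest entries (the maximally extended one); its domain and image codes are denoted $\mathrm{domC}(\varphi)$ and $\mathrm{imC}(\varphi)$. The partial action of $\varphi$ on $\{0,1\}^*$ is $\varphi(pu) = \varphi(p)u$ for $p\in\mathrm{domC}(\varphi)$, $u\in\{0,1\}^*$, and $\varphi(x)$ is undefined if $x \notin \mathrm{domC}(\varphi)\{0,1\}^*$. $\mathrm{maxlen}(\varphi) = \max\{|z| : z \in \mathrm{domC}(\varphi)\cup\mathrm{imC}(\varphi)\}$ and $\mathrm{maxlen}(S) = \max_{\varphi\in S}\mathrm{maxlen}(\varphi)$ for finite $S\subseteq V$. A monoid generating set $\Gamma\subseteq V$ is regarded as a finite alphabet; for $w = a_n\cdots a_1 \in \Gamma^+$, $w(\cdot)$ denotes the element $a_n\circ\cdots\circ a_1$ of $V$ ($a_1$ applied first), and its partial action on $\{0,1\}^*$ is that of this element of $V$. *)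

From mathcomp Require Import all_boot.
Set Implicit Arguments. Unset Strict Implicit. Unset Printing Implicit Defensive.

Definition word := seq bool.
Definition stream := nat -> bool.

Definition is_prefix (p x : word) : Prop := exists u : word, x = p ++ u.

Definition prefix_code (P : word -> Prop) : Prop :=
  forall p q, P p -> P q -> is_prefix p q -> p = q.

Definition maximal_prefix_code (P : word -> Prop) : Prop :=
  prefix_code P /\
  forall P' : word -> Prop, prefix_code P' -> (forall x, P x -> P' x) ->
    forall x, P' x -> P x.

(* A table: a finite list of pairs (p, phi(p)). *)
Definition table := seq (word * word).

Definition domC (t : table) : seq word := map fst t.
Definition imC (t : table) : seq word := map snd t.

(* bijection between two finite maximal prefix codes *)
Definition valid_table (t : table) : Prop :=
  uniq (domC t) /\ uniq (imC t) /\
  maximal_prefix_code (fun x => x \in domC t) /\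
  maximal_prefix_code (fun x => x \in imC t).

Definition scat (p : word) (s : stream) : stream :=
  fun n => if n < size p then nth false p n else s (n - size p).

Definition spref (p : word) (s : stream) : bool :=
  all (fun i => nth false p i == s i) (iota 0 (size p)).

(* The homeomorphism of {0,1}^omega induced by a table: p t |-> phi(p) t *)
Definition tfun (t : table) (s : stream) : stream :=
  let pq := nth ([::], [::]) t (find (fun pq : word * word => spref pq.1 s) t) in
  scat pq.2 (fun n => s (n + size pq.1)).

Definition represents (t : table) (f : stream -> stream) : Prop :=
  valid_table t /\
  forall p q (u : stream), (p, q) \in t -> forall n, f (scat p u) n = scat q u n.

(* t is the table of f with the fewest entries (the maximally extended one) *)
Definition max_table (f : stream -> stream) (t : table) : Prop :=
  represents t f /\ forall t', represents t' f -> size t <= size t'.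

Definition pact (f : stream -> stream) (x y : word) : Prop :=
  exists t, max_table f t /\
    exists p q u, (p, q) \in t /\ x = p ++ u /\ y = q ++ u.

Definition maxlen (t : table) : nat :=
  \max_(pq <- t) maxn (size pq.1) (size pq.2).

Definition maxlenS (G : seq table) : nat := \max_(a <- G) maxlen a.

(* A word w = a_n ... a_1 over the alphabet Gamma is represented by the list
   [:: a_1; ...; a_n] in APPLICATION order (a_1 applied first).
   wfun ws is the element a_n o ... o a_1 of V. *)
Definition wfun (ws : seq table) : stream -> stream :=
  foldr (fun a f => f \o tfun a) id ws.

From mathcomp Require Import all_boot zify.
From Stdlib Require Import Classical FunctionalExtensionality.
Set Implicit Arguments. Unset Strict Implicit. Unset Printing Implicit Defensive.

(* Each step x_(i-1) -> x_i of the computation uses an entry (d_i, e_i) of the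
   table of a_i: x_(i-1) = d_i u_i and x_i = e_i u_i.  If u_k is the shortest of
   the u_i, then, since consecutive decompositions share a word, every x_i ends
   with s := u_k; stripping s leaves words z_i that still move by table entries,
   so |z_i| changes by at most maxlen(Gamma) per step, while |z_k| and |z_(k+1)|
   are themselves at most maxlen(Gamma).  That a rule f(x u) = y u of any element
   f of V is always realised by an entry of its maximally extended table
   (otherwise the entries extending x could be merged into (x, y), giving a
   smaller table) makes the partial actions on x = z_0 s and on z_0
   correspond; the element w and its suffixes have tables because V is closed
   under composition. *)

(** * Words and streams *)

Definition stake (s : stream) (n : nat) : word := mkseq s n.

Lemma scat_cat p q u : scat (p ++ q) u = scat p (scat q u).
Proof.
apply: functional_extensionality => n; rewrite /scat size_cat nth_cat.
case: (ltnP n (size p)) => np; first by have -> : n < size p + size q by lia.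
case: (ltnP (n - size p) (size q)) => nq; first by have -> : n < size p + size q by lia.
have -> : n < size p + size q = false by lia.
by rewrite subnDA.
Qed.

Lemma scat_prefix p q u v : scat p u = scat q v -> size p <= size q -> is_prefix p q.
Proof.
move=> E le_pq; exists (drop (size p) q); rewrite -[LHS](cat_take_drop (size p)); congr (_ ++ _).
apply: (@eq_from_nth _ false); rewrite ?size_takel // => i lt_ip.
have := f_equal (fun s => s i) E; rewrite /scat lt_ip nth_take // => ->.
by have -> : i < size q by lia.
Qed.

Lemma scat_injr p u v : scat p u = scat p v -> u = v.
Proof.
move=> E; apply: functional_extensionality => k.
have := f_equal (fun s => s (k + size p)) E; rewrite /scat.
have -> : k + size p < size p = false by lia.
by rewrite addnK.
Qed.

Lemma scat_injl p q : (forall u, scat p u = scat q u) -> p = q.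
Proof.
wlog le_pq : p q / size p <= size q => [hwlog E|E].
  by case: (leqP (size p) (size q)) => [|/ltnW] H; [|apply/esym]; apply: hwlog.
have [[|b w] def_q] := scat_prefix (E (fun _ => true)) le_pq; subst q.
  by rewrite cats0.
move/(_ (fun _ => ~~ b))/(f_equal (fun s => s (size p))): E.
rewrite /scat ltnn size_cat addnS ltnS leq_addr nth_cat ltnn subnn.
by case: (b).
Qed.

Lemma sprefP p s : reflect (exists u, s = scat p u) (spref p s).
Proof.
apply: (iffP allP) => [nth_p|[u ->] i]; last first.
  by rewrite mem_iota add0n /scat => /andP [_ ->].
exists (fun k => s (k + size p)); apply: functional_extensionality => k; rewrite /scat.
case: ltnP => [lt_kp|le_pk]; last by rewrite subnK.
by apply/esym/eqP/nth_p; rewrite mem_iota.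
Qed.

Lemma spref_scat p u : spref p (scat p u).
Proof. by apply/sprefP; exists u. Qed.

Lemma spref_stake s n : spref (stake s n) s.
Proof.
apply/allP => i; rewrite /stake mem_iota size_mkseq add0n => /andP [_ lt_in].
by rewrite nth_mkseq.
Qed.

Lemma size_stake s n : size (stake s n) = n.
Proof. exact: size_mkseq. Qed.

Lemma spref_cat p w s : spref (p ++ w) s -> spref p s.
Proof. by move=> /sprefP [u ->]; rewrite scat_cat spref_scat. Qed.

Lemma spref_total p q s : spref p s -> spref q s -> is_prefix p q \/ is_prefix q p.
Proof.
move=> /sprefP [u ->] /sprefP [v E].
case: (leqP (size p) (size q)) => [|/ltnW] H; first by left; apply: scat_prefix E H.
by right; apply: scat_prefix (esym E) H.
Qed.

Lemma prefix_size_eq p q : is_prefix p q -> size p = size q -> p = q.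
Proof. by move=> [[|b u] ->]; rewrite ?cats0 // size_cat /=; lia. Qed.

Lemma prefix_rcons_cases (p x : word) b :
  is_prefix p (rcons x b) -> p = rcons x b \/ is_prefix p x.
Proof.
case=> u; case/lastP: u => [|u c]; first by rewrite cats0; left.
by rewrite -rcons_cat => /rcons_inj [-> _]; right; exists u.
Qed.

Lemma cats_injl (s : word) : injective (fun a : word => a ++ s).
Proof.
move=> a b /(congr1 (drop (size s) \o rev)) /=.
by rewrite !rev_cat !drop_size_cat ?size_rev //; apply: (inv_inj revK).
Qed.

Definition lastn (m : nat) (a : word) : word := drop (size a - m) a.

Lemma lastn_cat m a b : m <= size b -> lastn m (a ++ b) = lastn m b.
Proof.
move=> le_mb; rewrite /lastn drop_cat size_cat.
have -> : size a + size b - m < size a = false by lia.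
by congr drop; lia.
Qed.

Lemma lastn_size a : lastn (size a) a = a.
Proof. by rewrite /lastn subnn drop0. Qed.

Lemma cat_take_lastn m a : take (size a - m) a ++ lastn m a = a.
Proof. exact: cat_take_drop. Qed.

Lemma uniq_map_inj_in (T U : eqType) (g : T -> U) s :
  uniq (map g s) -> {in s &, injective g}.
Proof.
elim: s => //= a s IH /andP [gas uniq_gs] x y.
rewrite !in_cons => /predU1P [->|xs] /predU1P [->|ys] // gxy.
- by move: gas; rewrite gxy (map_f g ys).
- by move: gas; rewrite -gxy (map_f g xs).
- exact: IH.
Qed.

(** * Prefix codes and tables *)

Definition complete (l : seq word) : Prop := forall s, exists2 p, p \in l & spref p s.

Lemma maximal_complete l : maximal_prefix_code (fun x => x \in l) -> complete l.
Proof.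
move=> [l_code l_max] s; apply: NNPP => no_pref.
pose x := stake s (\max_(p <- l) size p).+1.
have x_pref : spref x s by apply: spref_stake.
have long_x p : p \in l -> size p < size x.
  by move=> pl; rewrite size_stake ltnS (@leq_bigmax_seq _ _ xpredT).
suff xl : x \in l by apply: no_pref; exists x.
have x_code : prefix_code (fun z => z \in l \/ z = x).
  move=> p q [pl|->] [ql|->] pq //; first exact: l_code.
    by case: no_pref; exists p => //; case: pq => u def_x; apply: (@spref_cat p u); rewrite -def_x.
  by case: pq => u def_q; have := long_x q ql; rewrite def_q size_cat; lia.
by apply: (l_max _ x_code) => [z|]; [left | right].
Qed.

Lemma complete_maximal l : prefix_code (fun x => x \in l) -> complete l ->
  maximal_prefix_code (fun x => x \in l).
Proof.
move=> l_code l_cpl; split=> // P' P'_code sub x P'x.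
have [p pl /spref_total] := l_cpl (scat x (fun _ => false)).
case/(_ _ (spref_scat x _)) => pref.
- by rewrite -(P'_code p x (sub p pl) P'x pref).
- by rewrite (P'_code x p P'x (sub p pl) pref).
Qed.

Lemma domC_fun (t : table) p q1 q2 :
  uniq (domC t) -> (p, q1) \in t -> (p, q2) \in t -> q1 = q2.
Proof. by move=> /uniq_map_inj_in inj pq1 pq2; case: (inj _ _ pq1 pq2 erefl). Qed.

Section Represents.
Variables (t : table) (f : stream -> stream).
Hypothesis t_f : represents t f.

Lemma represents_rule p q u : (p, q) \in t -> f (scat p u) = scat q u.
Proof. by move=> pq; apply: functional_extensionality; apply: t_f.2. Qed.

Lemma represents_domC_cover s : exists p q, (p, q) \in t /\ spref p s.
Proof.
have [_ [_ [/maximal_complete dom_cpl _]]] := t_f.1.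
by have [_ /mapP [[p q] pq ->] ps] := dom_cpl s; exists p, q.
Qed.

Lemma represents_imC_cover s : exists p q, (p, q) \in t /\ spref q s.
Proof.
have [_ [_ [_ /maximal_complete im_cpl]]] := t_f.1.
by have [_ /mapP [[p q] pq ->] qs] := im_cpl s; exists p, q.
Qed.

Lemma represents_inj : injective f.
Proof.
have [_ [im_uniq [_ [im_code _]]]] := t_f.1.
move=> r1 r2; have [p1 [q1 [pq1 /sprefP [u1 ->]]]] := represents_domC_cover r1.
have [p2 [q2 [pq2 /sprefP [u2 ->]]]] := represents_domC_cover r2.
rewrite (represents_rule _ pq1) (represents_rule _ pq2) => E.
have eq_q : q1 = q2.
  have := spref_scat q2 u2; rewrite -E => /(spref_total (spref_scat _ _)) [qq|qq].
  + by apply: im_code qq; [exact: (map_f snd pq1) | exact: (map_f snd pq2)].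
  + by apply/esym; apply: im_code qq; [exact: (map_f snd pq2) | exact: (map_f snd pq1)].
subst q2; have [->] := uniq_map_inj_in im_uniq pq1 pq2 erefl.
by rewrite (scat_injr E).
Qed.

Lemma represents_surj s : exists r, f r = s.
Proof.
have [p [q [pq /sprefP [u ->]]]] := represents_imC_cover s.
by exists (scat p u); apply: represents_rule.
Qed.
End Represents.

Section RepresentsIntro.
Variables (t : table) (f : stream -> stream).
Hypotheses (f_inj : injective f) (f_surj : forall s, exists r, f r = s).
Hypotheses (dom_uniq : uniq (domC t)) (dom_code : prefix_code (fun x => x \in domC t)).
Hypothesis dom_cpl : complete (domC t).
Hypothesis rule : forall p q u, (p, q) \in t -> f (scat p u) = scat q u.

Lemma entry_eq_of_prefix_imC p1 q1 p2 q2 : (p1, q1) \in t -> (p2, q2) \in t ->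
  is_prefix q1 q2 -> (p1, q1) = (p2, q2).
Proof.
move=> pq1 pq2 [w def_q2].
pose v : stream := fun _ => false.
have E : scat p2 v = scat p1 (scat w v).
  by apply: f_inj; rewrite (rule _ pq1) (rule _ pq2) def_q2 scat_cat.
have eq_p : p1 = p2.
  have dom1 : p1 \in domC t by exact: (map_f fst pq1).
  have dom2 : p2 \in domC t by exact: (map_f fst pq2).
  have := spref_scat p2 v; rewrite E => /(spref_total (spref_scat _ _)) [pp|pp].
  + exact: dom_code pp.
  + exact/esym/dom_code.
by subst p2; rewrite (domC_fun dom_uniq pq1 pq2).
Qed.

Lemma represents_intro : represents t f.
Proof.
have im_code : prefix_code (fun x => x \in imC t).
  move=> _ _ /mapP [[p1 q1] pq1 ->] /mapP [[p2 q2] pq2 ->] /= qq.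
  by case: (entry_eq_of_prefix_imC pq1 pq2 qq).
have im_uniq : uniq (imC t).
  rewrite /imC map_inj_in_uniq ?(map_uniq dom_uniq) // => [[p1 q1] [p2 q2]] pq1 pq2 /= eq_q.
  by apply: entry_eq_of_prefix_imC => //; exists [::]; rewrite cats0.
have im_cpl : complete (imC t).
  move=> s; have [r <-] := f_surj s.
  have [_ /mapP [[p q] pq ->] /sprefP [u ->]] := dom_cpl r.
  by exists q; [exact: (map_f snd pq) | rewrite (rule _ pq) spref_scat].
split; last by move=> p q u pq n; rewrite (rule _ pq).
by do 2!split=> //; split; apply: complete_maximal.
Qed.
End RepresentsIntro.

Lemma represents_uniform f N : injective f -> (forall s, exists r, f r = s) ->
  (forall d, size d = N -> exists e, forall u, f (scat d u) = scat e u) ->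
  exists t, represents t f.
Proof.
move=> f_inj f_surj rules.
have [e rule_e] := fin_all_exists (fun d : N.-tuple bool => rules d (size_tuple d)).
exists [seq (val d, e d) | d <- enum {: N.-tuple bool}].
have domE : domC [seq (val d, e d) | d <- enum {: N.-tuple bool}]
          = [seq val d | d <- enum {: N.-tuple bool}] by rewrite /domC -map_comp.
apply: represents_intro => //; rewrite ?domE.
- by rewrite map_inj_uniq ?enum_uniq //; apply: val_inj.
- move=> _ _ /mapP [p _ ->] /mapP [q _ ->] pq.
  by apply: (prefix_size_eq pq); rewrite !size_tuple.
- move=> s; exists (val (Tuple (introT eqP (size_stake s N)))); last exact: spref_stake.
  by apply: map_f; rewrite mem_enum.
- by move=> p q u /mapP [d _ [-> ->]].
Qed.

Definition dom_maxlen (t : table) : nat := \max_(pq <- t) size pq.1.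

Lemma size_dom_le_maxlen (t : table) (p q : word) : (p, q) \in t -> size p <= dom_maxlen t.
Proof. by move=> pq; apply: (@leq_bigmax_seq _ _ xpredT (fun pq => size pq.1) (p, q)). Qed.

Lemma represents_domC_prefix t f d : represents t f ->
  dom_maxlen t <= size d -> exists p q w : word, (p, q) \in t /\ d = p ++ w.
Proof.
move=> t_f long_d; have [p [q [pq /sprefP [u E]]]] := represents_domC_cover t_f (scat d xpred0).
have le_pd : size p <= size d := leq_trans (size_dom_le_maxlen pq) long_d.
by have [w ->] := scat_prefix (esym E) le_pd; exists p, q, w.
Qed.

Lemma represents_comp t1 t2 f1 f2 : represents t1 f1 -> represents t2 f2 ->
  exists t, represents t (f2 \o f1).
Proof.
move=> t1_f1 t2_f2; apply: (represents_uniform (N := dom_maxlen t1 + dom_maxlen t2)).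
- by move=> r1 r2 /(represents_inj t2_f2) /(represents_inj t1_f1).
- move=> s; have [r <-] := represents_surj t2_f2 s.
  by have [r' <-] := represents_surj t1_f1 r; exists r'.
move=> d size_d.
have [|p1 [q1 [w1 [pq1 def_d]]]] := represents_domC_prefix t1_f1 (d := d).
  by rewrite size_d leq_addr.
have [|p2 [q2 [w2 [pq2 def_qw]]]] := represents_domC_prefix t2_f2 (d := q1 ++ w1).
  by move: size_d (size_dom_le_maxlen pq1); rewrite def_d !size_cat; lia.
exists (q2 ++ w2) => u.
by rewrite def_d /= scat_cat (represents_rule t1_f1 _ pq1) -scat_cat def_qw !scat_cat
  (represents_rule t2_f2 _ pq2).
Qed.

Lemma represents_id : exists t, represents t id.
Proof.
apply: (represents_uniform (N := 0)) => [r1 r2 //|s|[|b d] //]; first by exists s.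
by exists [::].
Qed.

Lemma wfun_represents ws : (forall a, a \in ws -> represents a (tfun a)) ->
  exists t, represents t (wfun ws).
Proof.
elim: ws => [|a ws IH] ws_rep; first exact: represents_id.
have [t t_ws] : exists t, represents t (wfun ws).
  by apply: IH => b bws; apply: ws_rep; rewrite in_cons bws orbT.
exact: represents_comp (ws_rep a (mem_head a ws)) t_ws.
Qed.

(** * Maximally extended tables *)

Lemma max_table_exists t f : represents t f -> exists t', max_table f t'.
Proof.
have [n lt_tn] : exists n, size t < n by exists (size t).+1.
elim: n t lt_tn => // n IH t lt_tn t_f.
have [[t' [t'_f small]]|none] := classic (exists t', represents t' f /\ size t' < size t).
  by apply: (IH t') => //; lia.
exists t; split=> // t' t'_f; rewrite leqNgt; apply/negP => small.
by apply: none; exists t'.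
Qed.

(* If no domain word of [t] is a prefix of [x], the entries of [t] whose domain
   word extends [x] can be replaced by the single entry [(x, y)]; there are at
   least two of them (extending [rcons x false] and [rcons x true]), so the
   table shrinks. *)
Section Collapse.
Variables (t : table) (f : stream -> stream) (x y : word).
Hypothesis t_f : represents t f.
Hypothesis rule_xy : forall u, f (scat x u) = scat y u.
Hypothesis no_dom_prefix : forall p q : word, (p, q) \in t -> ~ is_prefix p x.

Let extends_x (pq : word * word) : bool := prefix x pq.1.

Let F := filter (predC extends_x) t.

Let domC_collapsed p : p \in domC F -> (exists q : word, (p, q) \in t) /\ ~~ prefix x p.
Proof. by case/mapP => [[p' q]]; rewrite mem_filter => /andP [xp pq] ->; split=> //; exists q. Qed.

Lemma collapse_represents : represents ((x, y) :: F) f.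
Proof.
have [dom_uniq [_ [[dom_code _] _]]] := t_f.1.
have dom_t p q : (p, q) \in t -> p \in domC t by move=> pq; apply: (map_f fst pq).
apply: represents_intro (represents_inj t_f) (represents_surj t_f) _ _ _ _.
- rewrite /domC /= -/(domC F); apply/andP; split.
    by apply/negP => /domC_collapsed [_]; rewrite prefix_refl.
  by apply: subseq_uniq dom_uniq; apply/map_subseq/filter_subseq.
- move=> p1 p2; rewrite /domC /= -/(domC F) !in_cons.
  case/predU1P => [->|/domC_collapsed [[q1 pq1] _]].
    by case/predU1P => [->|/domC_collapsed [_ xp2]] // /prefixP; rewrite (negbTE xp2).
  case/predU1P => [->|/domC_collapsed [[q2 pq2] _]].
    by move=> p1x; case: (no_dom_prefix pq1 p1x).
  by apply: dom_code; apply: dom_t; [exact: pq1 | exact: pq2].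
- move=> s; have [p [q [pq ps]]] := represents_domC_cover t_f s.
  have [/prefixP [w def_p]|xp] := boolP (prefix x p).
    by exists x; [exact: mem_head | apply: (@spref_cat x w); rewrite -def_p].
  have pqF : (p, q) \in F by rewrite mem_filter /= /extends_x xp.
  by exists p => //; rewrite in_cons (map_f fst pqF) orbT.
- move=> p q u; rewrite in_cons => /predU1P [[-> ->]|]; first exact: rule_xy.
  by rewrite mem_filter => /andP [_ pq]; rewrite (represents_rule t_f u pq).
Qed.

Lemma collapse_size : size ((x, y) :: F) < size t.
Proof.
have ext b : exists2 pq, pq \in t & prefix (rcons x b) pq.1.
  have [p [q [pq ps]]] := represents_domC_cover t_f (scat (rcons x b) xpred0).
  exists (p, q) => //.
  have [/prefix_rcons_cases [->|px]|/prefixP //] := spref_total ps (spref_scat _ _).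
    exact: prefix_refl.
  by case: (no_dom_prefix pq px).
have bit b pq : prefix (rcons x b) pq.1 -> nth false pq.1 (size x) = b.
  by move=> /prefixP [w ->]; rewrite nth_cat size_rcons ltnSn nth_rcons ltnn eqxx.
have [pq0 pq0t /[dup] /bit bit0 /(prefix_trans (prefix_rcons x false)) ext0] := ext false.
have [pq1 pq1t /[dup] /bit bit1 /(prefix_trans (prefix_rcons x true)) ext1] := ext true.
have two_ext : 2 <= count extends_x t.
  rewrite -size_filter (uniq_leq_size (s1 := [:: pq0; pq1])) //=.
    by rewrite inE andbT; apply/eqP => eq01; move: bit0; rewrite eq01 bit1.
  by move=> pq; rewrite !in_cons orbF mem_filter => /predU1P [->|/eqP ->]; apply/andP.
by move: (count_predC extends_x t); rewrite /= size_filter; lia.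
Qed.
End Collapse.

Definition table_step (t : table) (x y : word) : Prop :=
  exists p q w : word, (p, q) \in t /\ x = p ++ w /\ y = q ++ w.

Lemma table_step_rule t f x y : represents t f -> table_step t x y ->
  forall u, f (scat x u) = scat y u.
Proof.
by move=> t_f [p [q [w [pq [-> ->]]]]] u; rewrite !scat_cat (represents_rule t_f _ pq).
Qed.

Lemma max_table_step f t x y : max_table f t ->
  (forall u, f (scat x u) = scat y u) -> table_step t x y.
Proof.
move=> [t_f t_min] rule_xy.
have [[p [q [pq [w def_x]]]]|no_pref] :=
  classic (exists p q : word, (p, q) \in t /\ is_prefix p x).
  exists p, q, w; do !split=> //; apply: scat_injl => u.
  by rewrite -rule_xy def_x !scat_cat (represents_rule t_f _ pq).
have no_dom_prefix p q : (p, q) \in t -> ~ is_prefix p x.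
  by move=> pq px; apply: no_pref; exists p, q.
have := t_min _ (collapse_represents t_f rule_xy no_dom_prefix).
by rewrite leqNgt (collapse_size y t_f no_dom_prefix).
Qed.

Lemma pact_table_step f t x y : max_table f t -> pact f x y -> table_step t x y.
Proof.
move=> t_max [t' [[t'_f _] step]]; apply: max_table_step t_max _.
exact: table_step_rule t'_f step.
Qed.

Lemma pactE f z z' s y : (exists t, represents t f) ->
  (forall u, f (scat z u) = scat z' u) -> pact f (z ++ s) y <-> y = z' ++ s.
Proof.
move=> [t0 /max_table_exists [t t_max]] rule_z; split.
  move=> [t' [[t'_f _] step]]; apply: scat_injl => u.
  by rewrite -(table_step_rule t'_f step) !scat_cat rule_z.
move=> ->; exists t; split=> //; apply: max_table_step t_max _ => u.
by rewrite !scat_cat rule_z.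
Qed.

Lemma pact_of_rule f z z' : (exists t, represents t f) ->
  (forall u, f (scat z u) = scat z' u) -> pact f z z'.
Proof.
move=> f_rep rule_z; have [_] := pactE [::] (z' ++ [::]) f_rep rule_z.
by rewrite !cats0; apply.
Qed.

Lemma pact_moved_iff f z z' s : (exists t, represents t f) ->
  (forall u, f (scat z u) = scat z' u) ->
  (exists y, pact f (z ++ s) y /\ y <> z ++ s) <-> z' <> z.
Proof.
move=> f_rep rule_z; split.
  by move=> [y [/(pactE _ _ f_rep rule_z) -> moved]] eq_z; apply: moved; rewrite eq_z.
move=> moved; exists (z' ++ s); split; first exact/(pactE _ _ f_rep rule_z).
by move/cats_injl.
Qed.

(** * Computations *)

Section CommonSuffix.
Variables (n k : nat) (X d e u : nat -> word).
Hypothesis X_d : forall i, i < n -> X i = d i ++ u i.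
Hypothesis X_e : forall i, i < n -> X i.+1 = e i ++ u i.
Hypothesis k_lt : k < n.
Hypothesis u_k_min : forall i, i < n -> size (u k) <= size (u i).

Let L := size (u k).

(* Consecutive decompositions share the word [X i.+1] and no [u i] is shorter
   than [u k], so all the [u i] end with the same [size (u k)] letters. *)
Let lastn_u i : i < n -> lastn L (u i) = u k.
Proof.
have step j : j.+1 < n -> lastn L (u j.+1) = lastn L (u j).
  move=> lt_jn; have := X_e (ltnW lt_jn); rewrite X_d // => eq_X.
  by rewrite -(lastn_cat (d j.+1)) ?u_k_min // eq_X lastn_cat ?u_k_min //; lia.
have const j : j < n -> lastn L (u j) = lastn L (u 0).
  by elim: j => // j IH lt_jn; rewrite step // IH //; lia.
by move=> lt_in; rewrite const // -(const k) // lastn_size.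
Qed.

Let lastn_X i : i <= n -> lastn L (X i) = u k.
Proof.
move=> le_in; suff [j [a [lt_jn ->]]] : exists j a, j < n /\ X i = a ++ u j.
  by rewrite lastn_cat ?u_k_min ?lastn_u.
case: (ltngtP i n) le_in => // [lt_in|eq_in] _; first by exists i, (d i); rewrite X_d.
by exists i.-1, (e i.-1); split; [lia | rewrite -X_e; [congr X|]; lia].
Qed.

Lemma common_suffix : exists z v : nat -> word,
  [/\ forall i, i <= n -> X i = z i ++ u k,
      forall i, i < n -> z i = d i ++ v i /\ z i.+1 = e i ++ v i
    & v k = [::]].
Proof.
exists (fun i => take (size (X i) - L) (X i)), (fun i => take (size (u i) - L) (u i)).
have X_z i : i <= n -> X i = take (size (X i) - L) (X i) ++ u k.
  by move=> le_in; rewrite -[in X in _ ++ X](lastn_X le_in) cat_take_lastn.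
split=> [//|i lt_in|]; last by rewrite subnn take0.
have u_v : u i = take (size (u i) - L) (u i) ++ u k.
  by rewrite -[in X in _ ++ X](lastn_u lt_in) cat_take_lastn.
split; apply: (@cats_injl (u k)); rewrite /= -catA -u_v -X_z; try lia.
  exact: X_d.
exact: X_e.
Qed.
End CommonSuffix.

Lemma computation_common_suffix n (A : nat -> table) (X : nat -> word) : 0 < n ->
  (forall i, i < n -> table_step (A i) (X i) (X i.+1)) ->
  exists (s : word) (z : nat -> word) (k : nat),
    [/\ k < n, (z k, z k.+1) \in A k, forall i, i <= n -> X i = z i ++ s
      & forall i, i < n -> table_step (A i) (z i) (z i.+1)].
Proof.
move=> n_gt0 steps.
(* The guard [i < n] makes [P i] satisfiable for every [i], so that [xchoose]
   yields a total choice function. *)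
pose P i (deu : word * word * word) := (i < n) ==>
  [&& (deu.1.1, deu.1.2) \in A i, X i == deu.1.1 ++ deu.2 & X i.+1 == deu.1.2 ++ deu.2].
have exP i : exists deu, P i deu.
  have [lt_in|le_ni] := ltnP i n; last by exists ([::], [::], [::]); rewrite /P ltnNge le_ni.
  have [d [e [u [de [X_d X_e]]]]] := steps i lt_in.
  by exists (d, e, u); rewrite /P lt_in de X_d X_e !eqxx.
pose d i := (xchoose (exP i)).1.1; pose e i := (xchoose (exP i)).1.2.
pose u i := (xchoose (exP i)).2.
have de_spec i : i < n -> [/\ (d i, e i) \in A i, X i = d i ++ u i & X i.+1 = e i ++ u i].
  by move=> lt_in; move: (xchooseP (exP i)) => /implyP /(_ lt_in) /and3P [? /eqP ? /eqP ?].
case: (@arg_minnP _ (Ordinal n_gt0) xpredT (fun i : 'I_n => size (u i)) isT) => k _ k_min.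
have [||||z [v [X_z z_dv v_k]]] := @common_suffix n k X d e u.
- by move=> i /de_spec [].
- by move=> i /de_spec [].
- exact: ltn_ord.
- by move=> i lt_in; apply: (k_min (Ordinal lt_in)).
exists (u k), z, k; split=> //.
  have [dek _ _] := de_spec k (ltn_ord k).
  by have [-> ->] := z_dv k (ltn_ord k); rewrite v_k !cats0.
move=> i lt_in; have [dei _ _] := de_spec i lt_in.
by have [z_d z_e] := z_dv i lt_in; exists (d i), (e i), (v i).
Qed.

Section Walk.
Variables (g : nat -> nat) (M : nat).

Lemma walk_up a j : (forall i, a <= i < a + j -> g i.+1 <= g i + M) ->
  g (a + j) <= g a + j * M.
Proof.
elim: j => [|j IH] step; first by rewrite addn0 mul0n addn0.
have := step (a + j) ltac:(lia); have := IH (fun i ai => step i ltac:(lia)).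
rewrite addnS mulSn; lia.
Qed.

Lemma walk_down a j : (forall i, a <= i < a + j -> g i <= g i.+1 + M) ->
  g a <= g (a + j) + j * M.
Proof.
elim: j => [|j IH] step; first by rewrite addn0 mul0n addn0.
have := step (a + j) ltac:(lia); have := IH (fun i ai => step i ltac:(lia)).
rewrite addnS mulSn; lia.
Qed.

Lemma walk_bounded n k : k < n -> g k <= M -> g k.+1 <= M ->
  (forall i, i < n -> g i.+1 <= g i + M /\ g i <= g i.+1 + M) ->
  forall i, i <= n -> g i <= n * M.
Proof.
move=> lt_kn gk gk1 step i le_in.
have [le_ik|lt_ki] := leqP i k.
  have := walk_down (a := i) (j := k - i) (fun l li => (step l ltac:(lia)).2).
  rewrite subnKC // => /leq_trans; apply; apply: (@leq_trans ((k - i).+1 * M)).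
    by rewrite mulSn leq_add2r.
  by apply: leq_mul => //; lia.
have := walk_up (a := k.+1) (j := i - k.+1) (fun l li => (step l ltac:(lia)).1).
rewrite subnKC // => /leq_trans; apply; apply: (@leq_trans ((i - k.+1).+1 * M)).
  by rewrite mulSn leq_add2r.
by apply: leq_mul => //; lia.
Qed.
End Walk.

Lemma maxlen_entry (a : table) (p q : word) :
  (p, q) \in a -> size p <= maxlen a /\ size q <= maxlen a.
Proof.
move=> pq; have := @leq_bigmax_seq _ a xpredT (fun pq => maxn (size pq.1) (size pq.2)) _ pq isT.
by rewrite geq_max => /andP.
Qed.

Lemma maxlen_le_maxlenS (G : seq table) a : a \in G -> maxlen a <= maxlenS G.
Proof. by move=> aG; apply: (@leq_bigmax_seq _ G xpredT maxlen). Qed.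

Lemma table_step_size a x y : table_step a x y ->
  size y <= size x + maxlen a /\ size x <= size y + maxlen a.
Proof.
move=> [p [q [w [/maxlen_entry [p_le q_le] [-> ->]]]]].
by rewrite !size_cat; lia.
Qed.

Lemma wfun_rcons ws a s : wfun (rcons ws a) s = tfun a (wfun ws s).
Proof. by elim: ws s => //= b ws IH s; rewrite IH. Qed.

Lemma wfun_take_chain (ws : seq table) (z : nat -> word) :
  (forall i, i < size ws -> forall u, tfun (nth [::] ws i) (scat (z i) u) = scat (z i.+1) u) ->
  forall j, j <= size ws -> forall u, wfun (take j ws) (scat (z 0) u) = scat (z j) u.
Proof.
move=> rule; elim=> [|j IH] lt_jn u; first by rewrite take0.
by rewrite (take_nth [::] lt_jn) wfun_rcons IH ?rule // ltnW.
Qed.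

Lemma steps_size_bound n k M (A : nat -> table) (z : nat -> word) : k < n ->
  (forall i, i < n -> maxlen (A i) <= M) -> (z k, z k.+1) \in A k ->
  (forall i, i < n -> table_step (A i) (z i) (z i.+1)) ->
  forall i, i <= n -> size (z i) <= n * M.
Proof.
move=> lt_kn A_M zk z_steps.
have [zk_M zk1_M] : size (z k) <= M /\ size (z k.+1) <= M.
  by have := A_M k lt_kn; have [] := maxlen_entry zk; lia.
apply: (walk_bounded (g := size \o z) lt_kn zk_M zk1_M) => i lt_in /=.
by have := A_M i lt_in; have := table_step_size (z_steps i lt_in); lia.
Qed.

Lemma wfun_defined_moved_iff (ws : seq table) (z : nat -> word) s :
  (forall j, exists t, represents t (wfun (take j ws))) ->
  (forall j, j <= size ws -> forall u, wfun (take j ws) (scat (z 0) u) = scat (z j) u) ->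
  ((exists y, pact (wfun ws) (z 0 ++ s) y /\ y <> z 0 ++ s) /\
   (forall j, j < size ws -> exists y, pact (wfun (take j.+1 ws)) (z 0 ++ s) y)) <->
  ((exists y, pact (wfun ws) (z 0) y /\ y <> z 0) /\
   (forall j, j < size ws -> exists y, pact (wfun (take j.+1 ws)) (z 0) y)).
Proof.
move=> take_rep chain.
have ws_rep := take_rep (size ws); rewrite take_size in ws_rep.
have rule_ws u : wfun ws (scat (z 0) u) = scat (z (size ws)) u.
  by rewrite -(chain (size ws)) // take_size.
have moved := pact_moved_iff s ws_rep rule_ws.
have moved0 := pact_moved_iff [::] ws_rep rule_ws; rewrite cats0 in moved0.
have defined s' j : j < size ws -> exists y, pact (wfun (take j.+1 ws)) (z 0 ++ s') y.
  by move=> lt_jn; exists (z j.+1 ++ s'); apply/(pactE _ _ (take_rep _) (chain _ lt_jn)).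
split=> [[/moved moved_ws _]|[/moved0 moved_ws _]]; split.
- exact/moved0.
- by move=> j lt_jn; have := defined [::] j lt_jn; rewrite cats0.
- exact/moved.
- by move=> j; apply: defined.
Qed.

Theorem lemma3p1
  (G : seq table)
  (HG : forall a, a \in G -> max_table (tfun a) a)
  (Hgen : forall t, valid_table t ->
     exists ws : seq table, all (fun a => a \in G) ws /\
       forall s n, wfun ws s n = tfun t s n)
  (ws : seq table)
  (Hne : 0 < size ws)
  (HwG : all (fun a => a \in G) ws)
  (x : word) (xs : seq word)
  (Hxs : size xs = (size ws).+1)
  (Hx0 : nth [::] xs 0 = x)
  (Hcomp : forall i, i < size ws ->
     pact (tfun (nth [::] ws i)) (nth [::] xs i) (nth [::] xs i.+1)) :
  exists (s : word) (zs : seq word),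
    size zs = (size ws).+1 /\
    (forall i, i <= size ws ->
       nth [::] xs i = nth [::] zs i ++ s /\
       size (nth [::] zs i) <= size ws * maxlenS G) /\
    (forall i, i < size ws ->
       pact (tfun (nth [::] ws i)) (nth [::] zs i) (nth [::] zs i.+1)) /\
    pact (wfun ws) (nth [::] zs 0) (nth [::] zs (size ws)) /\
    (exists k, k <= size ws /\ size (nth [::] zs k) <= maxlenS G) /\
    (((exists y, pact (wfun ws) x y /\ y <> x) /\
      (forall j, j < size ws -> exists y, pact (wfun (take j.+1 ws)) x y))
     <->
     ((exists y, pact (wfun ws) (nth [::] zs 0) y /\ y <> nth [::] zs 0) /\
      (forall j, j < size ws ->
         exists y, pact (wfun (take j.+1 ws)) (nth [::] zs 0) y))).
Proof.
set n := size ws; set M := maxlenS G.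
have A_G i : i < n -> nth [::] ws i \in G by move=> lt_in; apply/(allP HwG)/mem_nth.
have A_M i : i < n -> maxlen (nth [::] ws i) <= M by move/A_G/maxlen_le_maxlenS.
have [s [z [k [lt_kn zk X_z z_steps]]]] := computation_common_suffix Hne
  (fun i lt_in => pact_table_step (HG _ (A_G i lt_in)) (Hcomp i lt_in)).
have chain := wfun_take_chain
  (fun i lt_in => table_step_rule (HG _ (A_G i lt_in)).1 (z_steps i lt_in)).
have take_rep j : exists t, represents t (wfun (take j ws)).
  by apply: wfun_represents => a /mem_take /(allP HwG) /HG [].
exists s, (mkseq z n.+1); rewrite size_mkseq.
have nth_z i : i <= n -> nth [::] (mkseq z n.+1) i = z i by move=> le_in; rewrite nth_mkseq.
rewrite !nth_z // -Hx0 X_z //.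
split=> //; split; [|split; [|split; [|split]]].
- move=> i le_in; rewrite nth_z // X_z //; split=> //.
  exact: (steps_size_bound lt_kn A_M zk z_steps).
- move=> i lt_in; rewrite (nth_z i (ltnW lt_in)) (nth_z i.+1 lt_in).
  by exists (nth [::] ws i); split; [exact: HG (A_G i lt_in) | exact: z_steps].
- by have := pact_of_rule (take_rep n) (chain n (leqnn n)); rewrite take_size.
- exists k; rewrite (nth_z k (ltnW lt_kn)); split; first exact: ltnW.
  by have := A_M k lt_kn; have [] := maxlen_entry zk; lia.
- exact: wfun_defined_moved_iff take_rep chain.
Qed.
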